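(* Fix $\rho>1$ and $q\in(0,1)$. For $x,y\in[0,\infty)$ define $$x\oplus_q y=\sup_{p\in[0,1]\cap\mathbb{Q}}\rho^{-\mathrm{KL}(p;q)}x^py^{1-p},\qquad \mathrm{KL}(p;q)=p\log\frac{p}{q}+(1-p)\log\frac{1-p}{1-q}.$$ Then $x\oplus_q y=y\oplus_{1-q}x$ for all $x,y\in[0,\infty)$, and the operation $\oplus_q$ is commutative on $[0,\infty)$ (i.e. $x\oplus_q y=y\oplus_q x$ for all $x,y\ge0$) if and only if $q=1/2$.
   Context: $\log$ is the natural logarithm, $0\log 0:=0$, $0^0:=1$. $\mathrm{KL}(p;q)$ is the Kullback–Leibler divergence of the binary distributions $(p,1-p)$ and $(q,1-q)$. *)

From HB Require Import structures.
From mathcomp Require Import all_boot all_order all_algebra.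
From mathcomp Require Import all_classical all_reals all_analysis.
Set Implicit Arguments. Unset Strict Implicit. Unset Printing Implicit Defensive.
Import Order.TTheory GRing.Theory Num.Theory.
Local Open Scope classical_set_scope.
Local Open Scope ring_scope.

(* Binary KL divergence KL(p;q) = p log(p/q) + (1-p) log((1-p)/(1-q)).
   The convention 0 log 0 = 0 holds automatically since the factor p
   (resp. 1-p) multiplies the logarithm. *)
Definition KL {R : realType} (p q : R) : R :=
  p * ln (p / q) + (1 - p) * ln ((1 - p) / (1 - q)).

Definition rat01 {R : realType} : set R :=
  [set p | (exists r : rat, p = ratr r) /\ 0 <= p <= 1].

(* x (+)_q y = sup_{p in [0,1] cap Q} rho^{-KL(p;q)} x^p y^(1-p);
   powR satisfies 0 `^ 0 = 1. *)
Definition oplusq {R : realType} (rho q x y : R) : R :=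
  sup [set z | exists2 p, rat01 p &
         z = rho `^ (- KL p q) * x `^ p * y `^ (1 - p)].

(* Substituting p |-> 1 - p in the supremum, and using KL(1-p; 1-q) = KL(p; q),
   gives x (+)_q y = y (+)_(1-q) x; so q = 1/2 makes (+)_q commutative.
   Conversely the point (1, 0) separates the parameters: only p = 1 contributes
   to 1 (+)_q 0, whence ln (1 (+)_q 0) = ln q * ln rho, and commutativity there
   forces ln q = ln (1 - q), i.e. q = 1/2. *)
From HB Require Import structures.
From mathcomp Require Import all_boot all_order all_algebra.
From mathcomp Require Import all_classical all_reals all_analysis.
From mathcomp Require Import lra.
Import Order.TTheory GRing.Theory Num.Theory.
Local Open Scope classical_set_scope.
Local Open Scope ring_scope.

Lemma sup_eq_max (R : realType) (S : set R) (c : R) :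
  S c -> ubound S c -> sup S = c.
Proof.
move=> Sc ubc; apply/le_anti/andP; split; first by apply: ge_sup => //; exists c.
by apply: ub_le_sup => //; exists c.
Qed.

Lemma rat01_oneB (R : realType) (p : R) : rat01 p -> rat01 (1 - p).
Proof.
move=> [[r ->] /andP[r0 r1]]; split; first by exists (1 - r); rewrite rmorphB rmorph1.
by apply/andP; split; lra.
Qed.

Lemma KL_oneB (R : realType) (p q : R) : KL (1 - p) (1 - q) = KL p q.
Proof. by rewrite /KL !subKr addrC. Qed.

Lemma oplusqC (R : realType) (rho q x y : R) :
  oplusq rho q x y = oplusq rho (1 - q) y x.
Proof.
rewrite /oplusq; congr sup; apply/seteqP; split=> z [p rp ->];
  (exists (1 - p); first exact: rat01_oneB); rewrite subKr mulrAC.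
  by rewrite KL_oneB.
by rewrite -[KL p _]KL_oneB subKr.
Qed.

Lemma oplusq_1_0 (R : realType) (rho q : R) :
  oplusq rho q 1 0 = rho `^ (- KL 1 q).
Proof.
apply: sup_eq_max.
  exists 1; last by rewrite subrr powRr0 powR1 !mulr1.
  by split; [exists 1; rewrite rmorph1 | rewrite ler01 lexx].
move=> z [p _ ->]; rewrite powR1 mulr1.
have [->|p_neq1] := eqVneq p 1; first by rewrite subrr powRr0 mulr1.
by rewrite powR0 ?mulr0 ?powR_ge0 // subr_eq0 eq_sym.
Qed.

Lemma ln_oplusq_1_0 (R : realType) (rho q : R) : 0 < rho -> 0 < q ->
  ln (oplusq rho q 1 0) = ln q * ln rho.
Proof.
move=> rho_gt0 q_gt0; rewrite oplusq_1_0 /powR gt_eqF // expRK.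
by rewrite /KL subrr !mul0r addr0 !mul1r lnV ?posrE // opprK.
Qed.

Theorem proposition8p3 (R : realType) (rho q : R) (hrho : 1 < rho)
  (hq0 : 0 < q) (hq1 : q < 1) :
  (forall x y : R, 0 <= x -> 0 <= y ->
     oplusq rho q x y = oplusq rho (1 - q) y x) /\
  ((forall x y : R, 0 <= x -> 0 <= y -> oplusq rho q x y = oplusq rho q y x)
     <-> q = 1 / 2).
Proof.
split=> [x y _ _|]; first exact: oplusqC.
split=> [comm|-> x y _ _]; last first.
  by rewrite oplusqC; congr oplusq; lra.
have rho_gt0 : 0 < rho by lra.
have ln_eq : ln q = ln (1 - q).
  apply: (mulIf (lt0r_neq0 (ln_gt0 hrho))).
  rewrite -ln_oplusq_1_0 // -ln_oplusq_1_0 ?subr_gt0 //.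
  by rewrite comm ?ler01 // oplusqC.
have : q = 1 - q by apply: ln_inj; rewrite // posrE subr_gt0.
lra.
Qed.
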